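(* Let $\mathcal M=(S,A,P)$ be an MDP, $T\subseteq S$ a set of sink target states, $\mathcal M'$ the pruned MDP and $s_0\in S'$. For every strategy $\sigma\in\Sigma^{\mathrm{Opt}}_{\mathcal M}$, $$\Pr'_{\sigma,s_0}(\Diamond T)=\frac{\Pr_{\sigma,s_0}(\Diamond T)}{\mathrm{Val}(s_0)}.$$
   Context: An MDP is $\mathcal M=(S,A,P)$ with $S,A$ finite and $P$ a partial map $S\times A\to\mathrm{Dist}(S)$; $a$ is legal at $s$ if $P(s,a)$ is defined; $P(s,a,s')=P(s,a)(s')$. A strategy maps finite paths $s_0a_0\dots s_n$ (with $a_i$ legal at $s_i$, $P(s_i,a_i,s_{i+1})>0$) to distributions over legal actions at the last state. $\Pr_{\sigma,s}$ is the induced probability measure on infinite paths from $s$. States of $T$ are sinks; $\Diamond T$ is the event of visiting $T$; $\mathrm{Val}(s)=\max_\sigma\Pr_{\sigma,s}(\Diamond T)$. $\mathrm{Opt}_{\mathcal M}=\{(s,a): a\text{ legal at }s,\ \mathrm{Val}(s)=\sum_{s'}P(s,a,s')\mathrm{Val}(s')\}$; $\Sigma^{\mathrm{Opt}}_{\mathcal M}$ is the set of strategies that, after every finite path $\rho$, only give positive probability to actions $a$ with $(\mathrm{last}(\rho),a)\in\mathrm{Opt}_{\mathcal M}$. The pruned MDP $\mathcal M'=(S',A,P')$ has $S'=\{s:\mathrm{Val}(s)>0\}$ and $P'(s,a,s')=P(s,a,s')\mathrm{Val}(s')/\mathrm{Val}(s)$ if $s\in S'$ and $(s,a)\in\mathrm{Opt}_{\mathcal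 M}$ (undefined otherwise). Strategies in $\Sigma^{\mathrm{Opt}}_{\mathcal M}$ are identified with strategies of $\mathcal M'$ by restriction to finite paths of $\mathcal M'$; $\Pr'_{\sigma,s}$ is the induced measure in $\mathcal M'$. *)

From HB Require Import structures.
From mathcomp Require Import all_boot all_order all_algebra.
From mathcomp Require Import classical_sets reals.
Set Implicit Arguments. Unset Strict Implicit. Unset Printing Implicit Defensive.
Import Order.TTheory GRing.Theory Num.Theory.
Local Open Scope classical_set_scope.
Local Open Scope ring_scope.

(* An MDP over finite state type S and action type A is given by
   [legal : S -> A -> bool] (a legal at s iff P(s,a) is defined) and
   [P : S -> A -> S -> R] (P s a s' = P(s,a)(s'), meaningful only when legal s a). *)

Definition is_MDP (R : realType) (S A : finType)
  (legal : S -> A -> bool) (P : S -> A -> S -> R) : Prop :=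
  forall s a, legal s a -> (forall s', 0 <= P s a s') /\ \sum_(s' : S) P s a s' = 1.

Definition sinks (R : realType) (S A : finType)
  (legal : S -> A -> bool) (P : S -> A -> S -> R) (T : {set S}) : Prop :=
  forall t, t \in T -> forall a, legal t a -> P t a t = 1.

(* A finite path s_0 a_0 s_1 ... a_{n-1} s_n is represented by s_0 and the
   list [:: (a_0,s_1); ...; (a_{n-1},s_n)]. *)
Definition lastst (S A : Type) (s0 : S) (p : seq (A * S)) : S :=
  last s0 (map snd p).

Fixpoint valid_from (R : realType) (S A : Type)
  (legal : S -> A -> bool) (P : S -> A -> S -> R) (s : S) (p : seq (A * S)) : bool :=
  match p with
  | [::] => true
  | (a, s') :: p' => [&& legal s a, 0 < P s a s' & valid_from legal P s' p']
  end.

Definition is_strategy (R : realType) (S A : finType)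
  (legal : S -> A -> bool) (P : S -> A -> S -> R)
  (sigma : S -> seq (A * S) -> A -> R) : Prop :=
  forall s0 p, valid_from legal P s0 p ->
    [/\ forall a, 0 <= sigma s0 p a,
        \sum_(a : A) sigma s0 p a = 1 &
        forall a, 0 < sigma s0 p a -> legal (lastst s0 p) a].

Fixpoint cyl_aux (R : realType) (S A : Type) (P : S -> A -> S -> R)
  (sigma : S -> seq (A * S) -> A -> R) (s0 : S) (pre : seq (A * S)) (s : S)
  (p : seq (A * S)) : R :=
  match p with
  | [::] => 1
  | (a, s') :: p' =>
      sigma s0 pre a * P s a s' * cyl_aux P sigma s0 (rcons pre (a, s')) s' p'
  end.

Definition cyl (R : realType) (S A : Type) (P : S -> A -> S -> R)
  (sigma : S -> seq (A * S) -> A -> R) (s0 : S) (p : seq (A * S)) : R :=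
  cyl_aux P sigma s0 [::] s0 p.

Definition visits (S A : finType) (T : {set S}) (s0 : S) (p : seq (A * S)) : bool :=
  (s0 \in T) || has (fun x => x.2 \in T) p.

Definition reach_within (R : realType) (S A : finType) (P : S -> A -> S -> R)
  (sigma : S -> seq (A * S) -> A -> R) (T : {set S}) (s0 : S) (n : nat) : R :=
  \sum_(p : n.-tuple (A * S) | visits T s0 p) cyl P sigma s0 p.

(* Pr_{sigma,s0}(<> T) = sup_n Pr_{sigma,s0}(T visited within n steps)
   (continuity of the path measure from below) *)
Definition PrReach (R : realType) (S A : finType) (P : S -> A -> S -> R)
  (sigma : S -> seq (A * S) -> A -> R) (T : {set S}) (s0 : S) : R :=
  sup (range (reach_within P sigma T s0)).

Definition Val (R : realType) (S A : finType)
  (legal : S -> A -> bool) (P : S -> A -> S -> R) (T : {set S}) (s : S) : R :=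
  sup [set PrReach P sigma T s | sigma in is_strategy legal P].

Definition Opt (R : realType) (S A : finType)
  (legal : S -> A -> bool) (P : S -> A -> S -> R) (T : {set S}) (s : S) (a : A) : bool :=
  legal s a && (Val legal P T s == \sum_(s' : S) P s a s' * Val legal P T s').

Definition opt_strategy (R : realType) (S A : finType)
  (legal : S -> A -> bool) (P : S -> A -> S -> R) (T : {set S})
  (sigma : S -> seq (A * S) -> A -> R) : Prop :=
  is_strategy legal P sigma /\
  forall s0 p a, valid_from legal P s0 p -> 0 < sigma s0 p a ->
    Opt legal P T (lastst s0 p) a.

Definition Spos (R : realType) (S A : finType)
  (legal : S -> A -> bool) (P : S -> A -> S -> R) (T : {set S}) : pred S :=
  fun s => 0 < Val legal P T s.

Definition Sprime (R : realType) (S A : finType)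
  (legal : S -> A -> bool) (P : S -> A -> S -> R) (T : {set S}) : finType :=
  {s : S | Spos legal P T s}.

Definition legal' (R : realType) (S A : finType)
  (legal : S -> A -> bool) (P : S -> A -> S -> R) (T : {set S})
  (s : Sprime legal P T) (a : A) : bool :=
  Opt legal P T (val s) a.

Definition P' (R : realType) (S A : finType)
  (legal : S -> A -> bool) (P : S -> A -> S -> R) (T : {set S})
  (s : Sprime legal P T) (a : A) (s' : Sprime legal P T) : R :=
  P (val s) a (val s') * Val legal P T (val s') / Val legal P T (val s).

Definition T' (R : realType) (S A : finType)
  (legal : S -> A -> bool) (P : S -> A -> S -> R) (T : {set S}) :
  {set Sprime legal P T} := [set s | val s \in T].

Definition restrict (R : realType) (S A : finType)
  (legal : S -> A -> bool) (P : S -> A -> S -> R) (T : {set S})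
  (sigma : S -> seq (A * S) -> A -> R) :
  Sprime legal P T -> seq (A * Sprime legal P T) -> A -> R :=
  fun s0 p => sigma (val s0) (map (fun x => (x.1, val x.2)) p).

(* Along a path of M' the pruned weights telescope: since
   P'(s,a,s') = P(s,a,s') Val(s') / Val(s), the M'-probability of a cylinder
   is its M-probability times Val(last) / Val(s0), and Val(last) = 1 once T
   has been visited, T being made of sinks.  An M-path that reaches T but
   leaves S' on the way has probability 0: after a state of value 0, the
   residual strategy reaches T with probability at most that value.  So every
   bounded-horizon reachability probability of M' is that of M divided by
   Val(s0), and so is their supremum. *)
From HB Require Import structures.
From mathcomp Require Import all_boot all_order all_algebra.
From mathcomp Require Import classical_sets boolp reals ring.
Set Implicit Arguments. Unset Strict Implicit. Unset Printing Implicit Defensive.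
Import Order.TTheory GRing.Theory Num.Theory.
Local Open Scope ring_scope.

Lemma big_tuple_cons (R : nmodType) (X : finType) n (F : n.+1.-tuple X -> R) :
  \sum_(t : n.+1.-tuple X) F t = \sum_(x : X) \sum_(t : n.-tuple X) F [tuple of x :: t].
Proof.
rewrite pair_big /= (reindex (fun p : X * n.-tuple X => [tuple of p.1 :: p.2])) //.
exists (fun t : n.+1.-tuple X => (thead t, [tuple of behead t])).
  by case=> x t _; congr pair; apply: val_inj.
by move=> t _; rewrite [RHS]tuple_eta.
Qed.

Lemma sup_eq_const (R : realType) (E : set R) (c : R) :
  (exists x, E x) -> (forall x, E x -> x = c) -> sup E = c.
Proof.
move=> [y Ey] Ec; have -> : E = [set c]%classic.
  by apply/seteqP; split=> x /=; [move/Ec | move=> ->; rewrite -(Ec y Ey)].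
exact: sup1.
Qed.

Lemma sup_range_divr (R : realType) (I : Type) (i0 : I) (f : I -> R) (M c : R) :
  (forall i, f i <= M) -> 0 < c ->
  sup (range (fun i => f i / c)) = sup (range f) / c.
Proof.
move=> fM c0.
have fub : has_ubound (range f) by exists M => _ [i _ <-].
have fcub : has_ubound (range (fun i => f i / c)).
  by exists (M / c) => _ [i _ <-]; rewrite ler_pM2r ?invr_gt0.
apply/le_anti/andP; split.
  apply: ge_sup; first by exists (f i0 / c), i0.
  move=> _ [i _ <-]; rewrite ler_pM2r ?invr_gt0 //.
  by apply: ub_le_sup => //; exists i.
rewrite ler_pdivrMr //; apply: ge_sup; first by exists (f i0), i0.
move=> _ [i _ <-]; rewrite -ler_pdivrMr //.
by apply: ub_le_sup => //; exists i.
Qed.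

Section Paths.
Variables (R : realType) (S A : Type) (legal : S -> A -> bool) (P : S -> A -> S -> R).

Lemma lastst_cat (s : S) (p q : seq (A * S)) : lastst s (p ++ q) = lastst (lastst s p) q.
Proof. by rewrite /lastst map_cat last_cat. Qed.

Lemma lastst_rcons (s : S) (p : seq (A * S)) x : lastst s (rcons p x) = x.2.
Proof. by rewrite /lastst map_rcons last_rcons. Qed.

Lemma valid_from_cat (s : S) (p q : seq (A * S)) :
  valid_from legal P s (p ++ q) =
  valid_from legal P s p && valid_from legal P (lastst s p) q.
Proof. by elim: p s => [|[a s'] p IH] s //=; rewrite IH !andbA. Qed.

Lemma valid_from_rcons (s : S) p a s' :
  valid_from legal P s (rcons p (a, s')) =
  [&& valid_from legal P s p, legal (lastst s p) a & 0 < P (lastst s p) a s'].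
Proof. by rewrite -cats1 valid_from_cat /= andbT. Qed.

Lemma cyl_aux_cat (sigma : S -> seq (A * S) -> A -> R) s0 pre s (q1 q2 : seq (A * S)) :
  cyl_aux P sigma s0 pre s (q1 ++ q2) =
  cyl_aux P sigma s0 pre s q1 * cyl_aux P sigma s0 (pre ++ q1) (lastst s q1) q2.
Proof.
elim: q1 pre s => [|[a s'] q1 IH] pre s /=; first by rewrite cats0 mul1r.
by rewrite IH cat_rcons !mulrA.
Qed.

End Paths.

Section Strategy.
Variables (R : realType) (S A : finType) (legal : S -> A -> bool) (P : S -> A -> S -> R).
Hypothesis HM : is_MDP legal P.
Variable sigma : S -> seq (A * S) -> A -> R.
Hypothesis Hs : is_strategy legal P sigma.

Lemma step_weight_ge0 s0 pre a s' : valid_from legal P s0 pre ->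
  0 <= sigma s0 pre a * P (lastst s0 pre) a s'.
Proof.
move=> Hv; have [sg0 _ sgl] := Hs Hv.
have := sg0 a; rewrite le0r => /orP[/eqP->|sp]; first by rewrite mul0r.
have [Pge _] := HM (sgl a sp).
exact: mulr_ge0 (ltW sp) (Pge s').
Qed.

Lemma step_weight_eq0_or_valid s0 pre a s' : valid_from legal P s0 pre ->
  sigma s0 pre a * P (lastst s0 pre) a s' = 0 \/
  valid_from legal P s0 (rcons pre (a, s')).
Proof.
move=> Hv; have [sg0 _ sgl] := Hs Hv.
have := sg0 a; rewrite le0r => /orP[/eqP->|sp]; first by left; rewrite mul0r.
have lg := sgl a sp; have [Pge _] := HM lg.
have := Pge s'; rewrite le0r => /orP[/eqP->|pp]; first by left; rewrite mulr0.
by right; rewrite valid_from_rcons Hv lg pp.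
Qed.

Lemma sum_step_weight s0 pre : valid_from legal P s0 pre ->
  \sum_(x : A * S) sigma s0 pre x.1 * P (lastst s0 pre) x.1 x.2 = 1.
Proof.
move=> Hv; have [sg0 sg1 sgl] := Hs Hv.
rewrite -(pair_bigA _ (fun a s' => sigma s0 pre a * P (lastst s0 pre) a s')) /=.
rewrite -[RHS]sg1; apply: eq_bigr => a _; rewrite -big_distrr /=.
have := sg0 a; rewrite le0r => /orP[/eqP->|sp]; first by rewrite !mul0r.
by have [_ ->] := HM (sgl a sp); rewrite mulr1.
Qed.

Lemma cyl_aux_ge0 q s0 pre : valid_from legal P s0 pre ->
  0 <= cyl_aux P sigma s0 pre (lastst s0 pre) q.
Proof.
elim: q pre => [|[a s'] q IH] pre Hv //=.
have [->|Hv'] := step_weight_eq0_or_valid a s' Hv; first by rewrite mul0r.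
apply: mulr_ge0; first exact: step_weight_ge0.
by have := IH _ Hv'; rewrite lastst_rcons.
Qed.

Lemma cyl_aux_neq0_valid q s0 pre : valid_from legal P s0 pre ->
  cyl_aux P sigma s0 pre (lastst s0 pre) q != 0 ->
  valid_from legal P (lastst s0 pre) q.
Proof.
elim: q pre => [|[a s'] q IH] pre Hv //=.
have [->|Hv'] := step_weight_eq0_or_valid a s' Hv; first by rewrite mul0r eqxx.
move: (Hv'); rewrite valid_from_rcons => /and3P[_ -> ->] nz /=.
have := IH _ Hv'; rewrite lastst_rcons; apply.
by apply: contraNneq nz => ->; rewrite mulr0.
Qed.

Lemma sum_cyl_aux n s0 pre : valid_from legal P s0 pre ->
  \sum_(q : n.-tuple (A * S)) cyl_aux P sigma s0 pre (lastst s0 pre) q = 1.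
Proof.
elim: n pre => [|n IH] pre Hv.
  by rewrite (big_pred1 [tuple]) // => t /=; rewrite [t]tuple0; apply/esym/eqP.
rewrite big_tuple_cons -[RHS](sum_step_weight Hv).
apply: eq_bigr => -[a s'] _ /=; rewrite -big_distrr /=.
have [->|Hv'] := step_weight_eq0_or_valid a s' Hv; first by rewrite !mul0r.
by have := IH _ Hv'; rewrite lastst_rcons => ->; rewrite mulr1.
Qed.

End Strategy.

Section Reachability.
Variables (R : realType) (S A : finType) (legal : S -> A -> bool) (P : S -> A -> S -> R).
Variable T : {set S}.
Hypothesis HM : is_MDP legal P.

Section FixedStrategy.
Variable sigma : S -> seq (A * S) -> A -> R.
Hypothesis Hs : is_strategy legal P sigma.

Lemma reach_within_le1 s n : reach_within P sigma T s n <= 1.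
Proof.
rewrite /reach_within -(sum_cyl_aux HM Hs n (s0 := s) (pre := [::])) //.
rewrite [leRHS](bigID (fun p : n.-tuple (A * S) => visits T s p)) /= lerDl.
by apply: sumr_ge0 => p _; apply: (cyl_aux_ge0 HM Hs).
Qed.

Lemma reach_within_le_PrReach s n : reach_within P sigma T s n <= PrReach P sigma T s.
Proof.
apply: ub_le_sup; last by exists n.
by exists 1 => _ [m _ <-]; apply: reach_within_le1.
Qed.

Lemma PrReach_le1 s : PrReach P sigma T s <= 1.
Proof.
apply: ge_sup; first by exists (reach_within P sigma T s 0), 0%N.
by move=> _ [m _ <-]; apply: reach_within_le1.
Qed.

End FixedStrategy.

Lemma PrReach_le_Val sigma s : is_strategy legal P sigma ->
  PrReach P sigma T s <= Val legal P T s.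
Proof.
move=> Hs; apply: ub_le_sup; last by exists sigma.
by exists 1 => _ [tau Htau <-]; exact: PrReach_le1.
Qed.

Lemma Val_target sigma t : is_strategy legal P sigma -> t \in T -> Val legal P T t = 1.
Proof.
move=> Hs tT; apply: sup_eq_const; first by exists (PrReach P sigma T t), sigma.
move=> _ [tau Htau <-]; apply: sup_eq_const.
  by exists (reach_within P tau T t 0), 0%N.
move=> _ [n _ <-]; rewrite /reach_within (eq_bigl predT) => [|p]; last first.
  by rewrite /visits tT.
exact: (sum_cyl_aux HM Htau n (s0 := t) (pre := [::])).
Qed.

Hypothesis HT : sinks legal P T.

Lemma sink_succ t a s' : t \in T -> legal t a -> 0 < P t a s' -> s' = t.
Proof.
move=> tT lg pp; apply/eqP; apply: contraTT pp => s't.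
have [Pge] := HM lg; rewrite (bigD1 t) //= HT // => /(congr1 (fun x => x - 1)).
by rewrite addrC addrK subrr => /psumr_eq0P/(_ s') -> //; rewrite ltxx.
Qed.

Lemma visits_suffix s0 (q1 q2 : seq (A * S)) : valid_from legal P s0 (q1 ++ q2) ->
  visits T s0 (q1 ++ q2) -> visits T (lastst s0 q1) q2.
Proof.
elim: q1 s0 => [|[a s'] q1 IH] s0 //= /and3P[lg pp Hv] Hvis; apply: IH => //.
case/orP: Hvis => [s0T|/orP[s'T|Hq]]; rewrite /visits.
- by rewrite (sink_succ s0T lg pp) s0T.
- by rewrite s'T.
- by apply/orP; right.
Qed.

Section Residual.
Variable sigma : S -> seq (A * S) -> A -> R.
Hypothesis Hs : is_strategy legal P sigma.
Variables (s0 : S) (pre : seq (A * S)).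
Hypothesis Hv : valid_from legal P s0 pre.

(* Only the behaviour from [lastst s0 pre] matters; elsewhere [sigma] is mere filler. *)
Definition residual : S -> seq (A * S) -> A -> R :=
  fun s q => if s == lastst s0 pre then sigma s0 (pre ++ q) else sigma s q.

Lemma cyl_aux_residual q r s :
  cyl_aux P residual (lastst s0 pre) r s q = cyl_aux P sigma s0 (pre ++ r) s q.
Proof.
by elim: q r s => [|[a s'] q IH] r s //=; rewrite IH /residual eqxx rcons_cat.
Qed.

Lemma residual_strategy : is_strategy legal P residual.
Proof.
move=> s q Hq; rewrite /residual; case: eqP => [E|_]; last exact: Hs.
rewrite E in Hq *; rewrite -lastst_cat; apply: Hs.
by rewrite valid_from_cat Hv Hq.
Qed.

Lemma cyl_aux_Val_le0 q : Val legal P T (lastst s0 pre) <= 0 ->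
  visits T (lastst s0 pre) q -> cyl_aux P sigma s0 pre (lastst s0 pre) q = 0.
Proof.
move=> V0 Hvis; rewrite -[pre in cyl_aux _ _ _ pre]cats0 -cyl_aux_residual.
have Hr := residual_strategy.
apply/le_anti; rewrite (cyl_aux_ge0 HM Hr q (pre := [::])) // andbT.
apply: le_trans V0; apply: le_trans (PrReach_le_Val _ Hr).
apply: le_trans (reach_within_le_PrReach Hr _ (size q)).
rewrite /reach_within (bigD1 (in_tuple q)) //= lerDl.
by apply: sumr_ge0 => p _; apply: (cyl_aux_ge0 HM Hr p (pre := [::])).
Qed.

End Residual.

Lemma cyl_eq0_leaving_Spos sigma s0 (p : seq (A * S)) : is_strategy legal P sigma ->
  visits T s0 p -> ~~ all (fun x => Spos legal P T x.2) p -> cyl P sigma s0 p = 0.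
Proof.
move=> Hs Hvis /allPn[x xp Vx]; apply/eqP; apply/negPn/negP => nz.
have := cyl_aux_neq0_valid HM Hs (pre := [::]) isT nz.
move: Hvis nz; case/splitPr: xp => q1 q2; rewrite -cat_rcons => Hvis nz Hv.
have Hv1 : valid_from legal P s0 (rcons q1 x) by move: Hv; rewrite valid_from_cat => /andP[].
have V0 : Val legal P T (lastst s0 (rcons q1 x)) <= 0 by rewrite lastst_rcons leNgt.
have Hvis2 := visits_suffix Hv Hvis.
by move: nz; rewrite /cyl cyl_aux_cat /= (cyl_aux_Val_le0 Hs Hv1 V0 Hvis2) mulr0 eqxx.
Qed.

End Reachability.

Section Pruned.
Variables (R : realType) (S A : finType) (legal : S -> A -> bool) (P : S -> A -> S -> R).
Variable T : {set S}.
Hypotheses (HM : is_MDP legal P) (HT : sinks legal P T).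
Variable sigma : S -> seq (A * S) -> A -> R.
Hypothesis Hs : is_strategy legal P sigma.

Local Notation S' := (Sprime legal P T).

Definition unprune (x : A * S') : A * S := (x.1, val x.2).

Lemma Val_Sprime_gt0 (s : S') : 0 < Val legal P T (val s).
Proof. exact: valP s. Qed.

Lemma cyl_aux_pruned (s0 : S') (q : seq (A * S')) pre (s : S') :
  cyl_aux (P' (T := T)) (restrict (T := T) sigma) s0 pre s q * Val legal P T (val s) =
  cyl_aux P sigma (val s0) (map unprune pre) (val s) (map unprune q)
    * Val legal P T (lastst (val s) (map unprune q)).
Proof.
elim: q pre s => [|[a s'] q IH] pre s /=; first by rewrite !mul1r.
have := IH (rcons pre (a, s')) s'; rewrite map_rcons => IH'.
rewrite -[RHS]mulrA -[in RHS]IH'.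
set c := cyl_aux _ _ _ _ _ q; have Vs := lt0r_neq0 (Val_Sprime_gt0 s).
by rewrite /P' /restrict; field.
Qed.

Lemma visits_pruned (s0 : S') (q : seq (A * S')) :
  visits (T' legal P T) s0 q = visits T (val s0) (map unprune q).
Proof. by rewrite /visits inE has_map; congr orb; apply: eq_has => x; rewrite /= inE. Qed.

Lemma cyl_pruned (s0 : S') (q : seq (A * S')) : visits (T' legal P T) s0 q ->
  cyl (P' (T := T)) (restrict (T := T) sigma) s0 q =
  cyl P sigma (val s0) (map unprune q) / Val legal P T (val s0).
Proof.
move=> Hvis; have V0 := lt0r_neq0 (Val_Sprime_gt0 s0).
rewrite -[LHS](mulfK V0) /cyl (cyl_aux_pruned s0 q [::] s0) /=.
have [->|nz] := eqVneq (cyl_aux P sigma (val s0) [::] (val s0) (map unprune q)) 0.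
  by rewrite !mul0r.
have Hv := cyl_aux_neq0_valid HM Hs (pre := [::]) isT nz.
rewrite visits_pruned in Hvis.
have := visits_suffix HM HT (q1 := map unprune q) (q2 := [::]).
rewrite cats0 => /(_ _ Hv Hvis).
by rewrite /visits orbF => /(Val_target HM Hs) ->; rewrite mulr1.
Qed.

Lemma reach_within_pruned (s0 : S') n :
  reach_within (P' (T := T)) (restrict (T := T) sigma) (T' legal P T) s0 n =
  reach_within P sigma T (val s0) n / Val legal P T (val s0).
Proof.
rewrite /reach_within mulr_suml (eq_bigr _ (fun q : n.-tuple _ => @cyl_pruned s0 q)).
rewrite (bigID (fun p : n.-tuple (A * S) => all (fun x => Spos legal P T x.2) p)) /=.
rewrite [X in _ = _ + X]big1 ?addr0 => [|p /andP[Hvis Hout]]; last first.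
  by rewrite (cyl_eq0_leaving_Spos HM HT Hs Hvis Hout) mul0r.
pose prune (x : A * S) := (x.1, insubd s0 x.2).
rewrite (reindex_onto (map_tuple unprune) (map_tuple prune)) /= => [|p /andP[_ /allP Sp]].
  apply: eq_bigl => q; rewrite visits_pruned all_map.
  have -> : map_tuple prune (map_tuple unprune q) == q.
    apply/eqP/val_inj; rewrite /= -map_comp map_id_in // => -[a s] _.
    by rewrite /prune /unprune /= valKd.
  by rewrite andbT; apply/esym/andb_idr => _; apply/allP => x _; apply: Val_Sprime_gt0.
apply: val_inj; rewrite /= -map_comp map_id_in // => -[a s] /Sp sp.
by rewrite /unprune /prune /= insubdK.
Qed.

End Pruned.

Theorem lemma4 (R : realType) (S A : finType)
  (legal : S -> A -> bool) (P : S -> A -> S -> R) (T : {set S}) :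
  is_MDP legal P -> sinks legal P T ->
  forall (s0 : Sprime legal P T) (sigma : S -> seq (A * S) -> A -> R),
    opt_strategy legal P T sigma ->
    PrReach (P' (T := T)) (restrict (T := T) sigma) (T' legal P T) s0
    = PrReach P sigma T (val s0) / Val legal P T (val s0).
Proof.
move=> HM HT s0 sigma [Hs _].
rewrite /PrReach (funext (reach_within_pruned HM HT Hs s0)).
apply: (sup_range_divr 0%N (reach_within_le1 T HM Hs (val s0))).
exact: Val_Sprime_gt0.
Qed.
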